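(* Let $K$ be a precubical set. For any $p$-cube $x$ of $\omega\mathcal{L}(K)$ with $p\geq0$, there exist a $p$-cube $y$ of $K\subset\omega\mathcal{L}(K)$ and a map $\mu\in\widehat{\square}([p],[p])$ such that $x=\mu^*(y)$, where $\mu^*:\mathcal{L}(K)_p\to\mathcal{L}(K)_p$ is the image of $\mu$ under the presheaf $\mathcal{L}(K)$.
   Context: $[0]=\{()\}$, $[n]=\{0,1\}^n$ ($n\ge1$) with the product order. Face maps $\delta_i^\alpha:[n-1]\to[n]$ insert $\alpha\in\{0,1\}$ at position $i$; $\square$ is the category with objects $[n]$, $n\ge0$, generated by face maps; its presheaves are precubical sets. A map $[m]\to[n]$ is adjacency-preserving if strictly increasing and it sends pairs at Hamming distance $1$ to pairs at Hamming distance $1$; $\widehat\square$ is the category with objects $[n]$ and all adjacency-preserving maps (it contains $\square$); its presheaves are transverse symmetric precubical sets. $\omega$ is the restriction functor along $\square\subset\widehat\square$ and $\mathcal L$ its left adjoint. The unit $K\to\omega\mathcal L(K)$ is an injective map of presheaves, through which $K$ is regarded as a subobject of $\omega\mathcal L(K)$; $\omega\mathcal L(K)_p=\mathcal L(K)_p$. *)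

From HB Require Import structures.
From mathcomp Require Import all_boot.
Set Implicit Arguments. Unset Strict Implicit. Unset Printing Implicit Defensive.

(* The object [n] = {0,1}^n of the cube categories (for n = 0 it is a singleton). *)
Definition cube (n : nat) : finType := {ffun 'I_n -> bool}.

Definition cle n (x y : cube n) : bool := [forall i, x i ==> y i].
Definition clt n (x y : cube n) : bool := (x != y) && cle x y.
Definition hdist n (x y : cube n) : nat := #|[set i | x i != y i]|.

Definition adjb m n (f : {ffun cube m -> cube n}) : bool :=
  [forall x, forall y,
     (clt x y ==> clt (f x) (f y)) && ((hdist x y == 1) ==> (hdist (f x) (f y) == 1))].

(* the hom-sets of the category \widehat\square *)
Definition hhom m n := {f : {ffun cube m -> cube n} | adjb f}.

Lemma adjb_id n : adjb [ffun x : cube n => x].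
Proof. by apply/forallP => x; apply/forallP => y; rewrite !ffunE !implybb. Qed.

Lemma adjb_comp m n k (f : {ffun cube n -> cube k}) (g : {ffun cube m -> cube n}) :
  adjb f -> adjb g -> adjb [ffun x => f (g x)].
Proof.
move=> /forallP hf /forallP hg; apply/forallP => x; apply/forallP => y.
rewrite !ffunE; move/forallP: (hg x) => /(_ y) /andP [h1 h2].
apply/andP; split; apply/implyP => h.
- by move/forallP: (hf (g x)) => /(_ (g y)) /andP [+ _] => /implyP; apply; apply: (implyP h1).
- by move/forallP: (hf (g x)) => /(_ (g y)) /andP [_ +] => /implyP; apply; apply: (implyP h2).
Qed.

Definition hid n : hhom n n := exist (@adjb n n) _ (adjb_id n).
Definition hcomp m n k (f : hhom n k) (g : hhom m n) : hhom m k :=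
  exist (@adjb m k) _ (adjb_comp (proj2_sig f) (proj2_sig g)).

Definition delta n (i : 'I_n.+1) (a : bool) (x : cube n) : cube n.+1 :=
  [ffun j => if unlift i j is Some k then x k else a].

Lemma delta_set n (i : 'I_n.+1) a (x y : cube n) :
  [set j | delta i a x j != delta i a y j] = lift i @: [set k | x k != y k].
Proof.
apply/setP => j; rewrite inE !ffunE; case: unliftP => [k ->|->].
- by rewrite mem_imset ?inE //; exact: lift_inj.
- rewrite eqxx /=; apply/esym/imsetP => -[k _] e; by have := neq_lift i k; rewrite -e eqxx.
Qed.

Lemma adjb_delta n (i : 'I_n.+1) a : adjb [ffun x => delta i a x].
Proof.
apply/forallP => x; apply/forallP => y; rewrite !ffunE /hdist delta_set.
rewrite (card_imset _ (@lift_inj _ i)) implybb andbT.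
apply/implyP => /andP [nxy /forallP le]; apply/andP; split.
- apply: contra nxy => /eqP e; apply/eqP/ffunP => k.
  by have := congr1 (fun f : cube n.+1 => f (lift i k)) e; rewrite !ffunE liftK.
- apply/forallP => j; rewrite !ffunE; case: unlift => [k|]; [exact: le | exact: implybb].
Qed.

Definition hdelta n (i : 'I_n.+1) (a : bool) : hhom n n.+1 :=
  exist (@adjb n n.+1) _ (adjb_delta i a).

(* Precubical sets = presheaves on \square, presented by face operators
   d_i^a : K_{n+1} -> K_n subject to every relation holding between composites
   of two face maps in \square (these generate all relations of \square;
   they are the cubical identities). *)
Record precubical := Precubical {
  pc :> nat -> Type;
  face : forall n, 'I_n.+1 -> bool -> pc n.+1 -> pc n;
  face_rel : forall n (i i' : 'I_n.+1) (j j' : 'I_n.+2) (a a' b b' : bool),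
    [ffun v => delta j b (delta i a v)] = [ffun v => delta j' b' (delta i' a' v)] ->
    forall x : pc n.+2, face i a (face j b x) = face i' a' (face j' b' x)
}.

Definition pc_map (K K' : precubical) (f : forall n, K n -> K' n) : Prop :=
  forall n (i : 'I_n.+1) (a : bool) (x : K n.+1), f n (face i a x) = face i a (f n.+1 x).

Record hpresheaf := HPresheaf {
  hp :> nat -> Type;
  act : forall m n, hhom m n -> hp n -> hp m;
  act_id : forall n (x : hp n), act (hid n) x = x;
  act_comp : forall m n k (f : hhom n k) (g : hhom m n) (x : hp k),
    act (hcomp f g) x = act g (act f x)
}.

Definition hp_map (L M : hpresheaf) (f : forall n, L n -> M n) : Prop :=
  forall m n (g : hhom m n) (x : L n), f m (act g x) = act g (f n x).

Definition omega_face (L : hpresheaf) n (i : 'I_n.+1) (a : bool) (x : L n.+1) : L n :=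
  act (hdelta i a) x.

Lemma omega_face_rel (L : hpresheaf) n (i i' : 'I_n.+1) (j j' : 'I_n.+2) (a a' b b' : bool) :
    [ffun v => delta j b (delta i a v)] = [ffun v => delta j' b' (delta i' a' v)] ->
    forall x : L n.+2, omega_face i a (omega_face j b x) = omega_face i' a' (omega_face j' b' x).
Proof.
move=> e x; rewrite /omega_face -!act_comp; congr (act _ x).
apply: val_inj => /=; apply/ffunP => v; rewrite !ffunE.
by have := congr1 (fun f : {ffun cube n -> cube n.+2} => f v) e; rewrite !ffunE.
Qed.

Definition omega (L : hpresheaf) : precubical :=
  Precubical (@omega_face_rel L).

(* (L, eta) is a left adjoint of omega at K: eta : K -> omega L is the universal
   arrow (unit) from K to omega. *)
Definition is_omega_universal (K : precubical) (L : hpresheaf)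
    (eta : forall n, K n -> L n) : Prop :=
  pc_map (K' := omega L) eta /\
  forall (M : hpresheaf) (phi : forall n, K n -> M n),
    pc_map (K' := omega M) phi ->
    (exists psi : forall n, L n -> M n,
        hp_map psi /\ forall n (y : K n), psi n (eta n y) = phi n y) /\
    (forall psi1 psi2 : forall n, L n -> M n,
        hp_map psi1 -> (forall n (y : K n), psi1 n (eta n y) = phi n y) ->
        hp_map psi2 -> (forall n (y : K n), psi2 n (eta n y) = phi n y) ->
        forall n (z : L n), psi1 n z = psi2 n z).

(* The cubes of L of the form act mu (eta y) with mu : [p] -> [p] form a
   sub-presheaf of L containing the image of eta; by the uniqueness part of
   the universal property, the inclusion of this sub-presheaf is onto.
   Closure under the action rests on a factorization: an adjacency-preserving
   map [n] -> [m] with n < m sends the maximal chain of [n] to a path of length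
   n, so it has a constant coordinate and factors through a face map. Hence
   every map [n] -> [m] is a composite of face maps after a map [n] -> [n],
   and face maps preserve the image of eta. *)
From Stdlib Require Import ProofIrrelevance.
From mathcomp Require Import all_boot.
Set Implicit Arguments. Unset Strict Implicit. Unset Printing Implicit Defensive.

Section CubeOrder.

Variable n : nat.
Implicit Types x y z : cube n.

Lemma cle_refl x : cle x x.
Proof. by apply/forallP => i; rewrite implybb. Qed.

Lemma hdist_xx x : hdist x x = 0.
Proof. by apply/eqP; rewrite cards_eq0; apply/eqP/setP => i; rewrite !inE eqxx. Qed.

Lemma hdist_leq_dim x y : hdist x y <= n.
Proof. by rewrite -{2}[n]card_ord max_card. Qed.

Lemma hdist_cle_add x y z : cle x y -> cle y z -> hdist x z = hdist x y + hdist y z.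
Proof.
move=> /forallP xy /forallP yz; rewrite /hdist -[LHS]addn0 -(cards0 'I_n) -cardsUI.
by congr (_ + _); apply: eq_card => i; rewrite !inE; move: (xy i) (yz i);
  case: (x i); case: (y i); case: (z i).
Qed.

Definition cube_chain (k : nat) : cube n := [ffun i : 'I_n => i < k].

Lemma cle_chain0 x : cle (cube_chain 0) x.
Proof. by apply/forallP => i; rewrite ffunE. Qed.

Lemma cle_chain_dim x : cle x (cube_chain n).
Proof. by apply/forallP => i; rewrite ffunE ltn_ord implybT. Qed.

Lemma clt_cube_chainS k : k < n -> clt (cube_chain k) (cube_chain k.+1).
Proof.
move=> kn; apply/andP; split.
- by apply/eqP => /ffunP /(_ (Ordinal kn)); rewrite !ffunE /= ltnn ltnSn.
- by apply/forallP => i; rewrite !ffunE; apply/implyP => /ltnW.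
Qed.

Lemma hdist_cube_chainS k : k < n -> hdist (cube_chain k) (cube_chain k.+1) = 1.
Proof.
move=> kn; rewrite /hdist -(cards1 (Ordinal kn)); apply: eq_card => i.
by rewrite !inE !ffunE ltnS -val_eqE /=; case: ltngtP.
Qed.

End CubeOrder.

Section AdjacencyPreserving.

Variables n m : nat.
Variable f : hhom n m.
Implicit Types x y : cube n.

Lemma hhom_clt x y : clt x y -> clt (val f x) (val f y).
Proof. by have /forallP/(_ x)/forallP/(_ y)/andP[/implyP] := valP f. Qed.

Lemma hhom_hdist1 x y : hdist x y = 1 -> hdist (val f x) (val f y) = 1.
Proof.
have /forallP/(_ x)/forallP/(_ y)/andP[_ /implyP h] := valP f.
by move=> e; apply/eqP/h; rewrite e.
Qed.

Lemma hhom_cle x y : cle x y -> cle (val f x) (val f y).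
Proof.
case: (eqVneq x y) => [-> _|nxy xy]; first exact: cle_refl.
by have /andP[] := @hhom_clt x y (introT andP (conj nxy xy)).
Qed.

Lemma hdist_hhom_chain k : k <= n ->
  hdist (val f (cube_chain n 0)) (val f (cube_chain n k)) = k.
Proof.
elim: k => [|k IH] kn; first exact: hdist_xx.
have c0k := hhom_cle (cle_chain0 (cube_chain n k)).
have ckS := hhom_cle (proj2 (andP (clt_cube_chainS kn))).
by rewrite (hdist_cle_add c0k ckS) IH ?(ltnW kn) // hhom_hdist1 ?hdist_cube_chainS ?addn1.
Qed.

Lemma hhom_dim_leq : n <= m.
Proof. by rewrite -{1}(hdist_hhom_chain (leqnn n)) hdist_leq_dim. Qed.

(* The image of the maximal chain is a path of length n < m in [m], so some
   coordinate does not change along it, hence is constant on all of f([n]). *)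
Lemma hhom_const_coord : n < m -> exists j, forall x, val f x j = val f (cube_chain n 0) j.
Proof.
move=> nm; set bot := val f (cube_chain n 0); set top := val f (cube_chain n n).
have : ~~ ([set: 'I_m] \subset [set j | bot j != top j]).
  apply: contraTN nm => /subset_leq_card.
  by rewrite cardsT card_ord -/(hdist bot top) hdist_hhom_chain // leqNgt.
case/subsetPn => j _; rewrite inE negbK => /eqP ej; exists j => x.
move/forallP: (hhom_cle (cle_chain0 x)) => /(_ j).
move/forallP: (hhom_cle (cle_chain_dim x)) => /(_ j).
by rewrite -/bot -/top -ej; case: (val f x j); case: (bot j).
Qed.

End AdjacencyPreserving.

Section FaceFactorization.

Variables n m : nat.
Variables (j : 'I_m.+1) (a : bool).
Implicit Types u v : cube m.

Lemma delta_eq u v : (delta j a u == delta j a v) = (u == v).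
Proof.
apply/eqP/eqP => [/ffunP e|-> //]; apply/ffunP => k.
by have := e (lift j k); rewrite !ffunE liftK.
Qed.

Lemma delta_cle u v : cle (delta j a u) (delta j a v) = cle u v.
Proof.
apply/forallP/forallP => le k.
- by have := le (lift j k); rewrite !ffunE liftK.
- by rewrite !ffunE; case: unlift; rewrite ?implybb.
Qed.

Lemma delta_clt u v : clt (delta j a u) (delta j a v) = clt u v.
Proof. by rewrite /clt delta_eq delta_cle. Qed.

Lemma delta_hdist u v : hdist (delta j a u) (delta j a v) = hdist u v.
Proof. by rewrite /hdist delta_set (card_imset _ (@lift_inj _ j)). Qed.

Definition drop_coord (F : {ffun cube n -> cube m.+1}) : {ffun cube n -> cube m} :=
  [ffun x => [ffun k => F x (lift j k)]].

Variable F : {ffun cube n -> cube m.+1}.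
Hypothesis F_const : forall x, F x j = a.

Lemma delta_drop_coord x : delta j a (drop_coord F x) = F x.
Proof.
apply/ffunP => k; rewrite !ffunE.
by case: unliftP => [k' ->|->]; rewrite ?ffunE ?F_const.
Qed.

Lemma adjb_drop_coord : adjb F -> adjb (drop_coord F).
Proof.
move=> /forallP adjF; apply/forallP => x; apply/forallP => y.
move/forallP: (adjF x) => /(_ y).
by rewrite -(delta_drop_coord x) -(delta_drop_coord y) delta_clt delta_hdist.
Qed.

End FaceFactorization.

Lemma hhom_face_factor n m (f : hhom n m.+1) : n < m.+1 ->
  exists (j : 'I_m.+1) (a : bool) (g : hhom n m), f = hcomp (hdelta j a) g.
Proof.
move=> nm; have [j fj] := hhom_const_coord f nm.
exists j, (val f (cube_chain n 0) j), (exist (@adjb n m) _ (adjb_drop_coord fj (valP f))).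
by apply: val_inj; apply/ffunP => x; rewrite /= ffunE [RHS]ffunE delta_drop_coord.
Qed.

Unset Implicit Arguments.

Section UniversalArrow.

Variables (K : precubical) (L : hpresheaf) (eta : forall n, K n -> L n).

Lemma act_face_eta : pc_map (K' := omega L) eta ->
  forall n (i : 'I_n.+1) a (y : K n.+1), act (hdelta i a) (eta n.+1 y) = eta n (face i a y).
Proof. by move=> eta_map n i a y; rewrite eta_map. Qed.

Lemma act_eta_factor : pc_map (K' := omega L) eta ->
  forall m n (f : hhom n m) (y : K m),
  exists (y' : K n) (mu : hhom n n), act f (eta m y) = act mu (eta n y').
Proof.
move=> eta_map; elim=> [|m IH] n f y.
  have := hhom_dim_leq f; rewrite leqn0 => /eqP n0; subst n.
  by exists y, f.
case: (eqVneq n m.+1) => [nm|nm]; first by subst n; exists y, f.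
have [|j [a [g ->]]] := hhom_face_factor f; first by rewrite ltn_neqAle nm hhom_dim_leq.
by rewrite act_comp act_face_eta //; apply: IH.
Qed.

Section SubPresheaf.

Variable P : forall n, L n -> Prop.
Hypothesis P_act : forall m n (g : hhom m n) (x : L n), P n x -> P m (act g x).

Let sub_eq {n} {u v : {x : L n | P n x}} : sval u = sval v -> u = v.
Proof. by apply: eq_sig_hprop => x; apply: proof_irrelevance. Qed.

Definition sub_act {m n} (g : hhom m n) (u : {x : L n | P n x}) : {x : L m | P m x} :=
  exist _ (act g (sval u)) (P_act _ _ g _ (proj2_sig u)).

Lemma sub_act_id n (u : {x : L n | P n x}) : sub_act (hid n) u = u.
Proof. by apply: sub_eq; apply: act_id. Qed.

Lemma sub_act_comp m n k (f : hhom n k) (g : hhom m n) (u : {x : L k | P k x}) :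
  sub_act (hcomp f g) u = sub_act g (sub_act f u).
Proof. by apply: sub_eq; apply: act_comp. Qed.

Definition sub_hpresheaf : hpresheaf := HPresheaf sub_act_id sub_act_comp.

Lemma omega_universal_ind : is_omega_universal eta ->
  (forall n (y : K n), P n (eta n y)) -> forall n (x : L n), P n x.
Proof.
move=> [eta_map univ] P_eta n x.
pose eta' n (y : K n) : sub_hpresheaf n := exist _ (eta n y) (P_eta n y).
have eta'_map : pc_map (K' := omega sub_hpresheaf) eta'.
  by move=> k i a y; apply: sub_eq; rewrite /= eta_map.
have [[psi [psi_map psi_eta]] _] := univ _ eta' eta'_map.
have [_ eta_unique] := univ L eta eta_map.
have <- : sval (psi n x) = x.
  apply: (eta_unique (fun k z => sval (psi k z)) (fun k z => z)) => //.
  - by move=> k l g z; rewrite psi_map.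
  - by move=> k y; rewrite psi_eta.
exact: proj2_sig.
Qed.

End SubPresheaf.

End UniversalArrow.

Theorem proposition8p3 (K : precubical) (L : hpresheaf) (eta : forall n, K n -> L n) :
  is_omega_universal eta ->
  forall (p : nat) (x : L p), exists (y : K p) (mu : hhom p p), x = act mu (eta p y).
Proof.
move=> univ.
apply: (omega_universal_ind K L eta (fun n x => exists y (mu : hhom n n), x = act mu (eta n y))).
- move=> m n g _ [y [mu ->]]; rewrite -act_comp.
  exact: act_eta_factor (proj1 univ) _ _ _ _.
- exact: univ.
- by move=> n y; exists y, (hid n); rewrite act_id.
Qed.
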